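(* Let $n\ge1$ and let $(X_t)_{t\ge0}$ be the classical occupancy Markov chain on $\{0,\dots,n\}$: $\Pr(X_{t+1}=i\mid X_t=i)=i/n$, $\Pr(X_{t+1}=i+1\mid X_t=i)=(n-i)/n$. Then for all integers $0\le r\le k<n$ and $t\ge0$, $$\Pr(X_t\le k\mid X_0=r)=\frac{n-k}{n^t}\binom{n-r}{n-k}\sum_{j=0}^{k-r}(-1)^{k-r-j}\binom{k-r}{j}\frac{(r+j)^t}{n-r-j};$$ moreover $\Pr(X_t\le n\mid X_0=r)=1$ for all $0\le r\le n$, and $\Pr(X_t\le k\mid X_0=r)=0$ if $k<r$.
   Context: Convention $0^0=1$. *)

From HB Require Import structures.
From mathcomp Require Import all_boot all_order all_algebra.
Set Implicit Arguments. Unset Strict Implicit. Unset Printing Implicit Defensive.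
Import Order.TTheory GRing.Theory Num.Theory.
Local Open Scope ring_scope.

Definition occ_trans (R : realFieldType) (n : nat) : 'M[R]_(n.+1) :=
  \matrix_(i < n.+1, j < n.+1)
    (if (j == i :> nat) then (i%:R / n%:R)
     else if (j == i.+1 :> nat) then ((n - i)%:R / n%:R) else 0).

(* Pr(X_t <= k | X_0 = r) : t-step transition probabilities (matrix power)
   summed over the states j <= k.  r is read as an element of {0..n}. *)
Definition occ_cdf (R : realFieldType) (n t r k : nat) : R :=
  \sum_(j < n.+1 | (j <= k)%N) ((occ_trans R n) ^+ t) (inord r) j.

From HB Require Import structures.
From mathcomp Require Import all_boot all_order all_algebra zify ring.
Import Order.TTheory GRing.Theory Num.Theory.
Local Open Scope ring_scope.

(* Write F_t(r) = Pr(X_t <= k | X_0 = r) for a fixed threshold k.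
   1. First-step analysis: row r of the transition matrix has only the two
      entries r/n and (n-r)/n, so F_{t+1}(r) = r/n F_t(r) + (n-r)/n F_t(r+1),
      and F_0(r) = [r <= k].  Induction on t along this recurrence gives the
      two boundary statements F_t(r) = 1 for k = n and F_t(r) = 0 for k < r.
   2. The claimed closed form G_t(r) (occ_closed below) satisfies the same
      recurrence for r <= k < n (occ_closed_step, resting on the Pascal-like
      identity j C(m,j) = m C(m-1,j-1) inside the sum), vanishes at r = k+1
      because C(n-k-1, n-k) = 0, and equals 1 at t = 0.  The last fact is the
      beta-integral identity
        sum_i (-1)^i C(m,i) / (N+1+i) = m! N! / (N+1+m)!
      (alt_recip_sum_closed), proved by induction on m via Pascal's rule.
   3. The main formula follows by induction on t, downwards in r. *)

Lemma eq_inord (n m : nat) (l : 'I_n.+1) : (m <= n)%N ->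
  (l == inord m) = (l == m :> nat).
Proof. by move=> mn; rewrite -val_eqE /= inordK. Qed.

Section FirstStepAnalysis.

Variables (R : realFieldType) (n : nat).

Lemma occ_cdf_inord (t r k : nat) : occ_cdf R n t (@inord n r) k = occ_cdf R n t r k.
Proof. by rewrite /occ_cdf inord_val. Qed.

(* Averaging against row r of the transition matrix: only the states r and
   r+1 contribute (for r = n the second weight is 0). *)
Lemma occ_trans_row (r : nat) (F : 'I_n.+1 -> R) : (r <= n)%N ->
  \sum_(l < n.+1) occ_trans R n (inord r) l * F l =
    r%:R / n%:R * F (inord r) + (n - r)%:R / n%:R * F (inord r.+1).
Proof.
move=> rn.
have entry l : occ_trans R n (inord r) l =
    if l == inord r then r%:R / n%:R
    else if (l == r.+1 :> nat) then (n - r)%:R / n%:R else 0.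
  by rewrite mxE eq_inord // inordK.
rewrite (bigD1 (inord r)) //= entry eqxx; congr (_ + _).
have [rlt|rge] := ltnP r n.
  have ne : inord r.+1 != inord r :> 'I_n.+1.
    by rewrite eq_inord // inordK // gtn_eqF.
  rewrite (bigD1 (inord r.+1)) //= entry (negbTE ne) inordK // eqxx.
  rewrite big1 ?addr0 // => l /andP[lr lS].
  by rewrite entry (negbTE lr) -(eq_inord _ _ _ rlt) (negbTE lS) mul0r.
have eq_rn : r = n by apply/eqP; rewrite eqn_leq rn.
subst r; rewrite subnn !mul0r big1 // => l /negbTE lr.
by rewrite entry lr (ltn_eqF (ltn_ord l)) mul0r.
Qed.

Lemma cdf_step (t r k : nat) : (r <= n)%N ->
  occ_cdf R n t.+1 r k =
    r%:R / n%:R * occ_cdf R n t r k + (n - r)%:R / n%:R * occ_cdf R n t r.+1 k.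
Proof.
move=> rn.
have -> : occ_cdf R n t.+1 r k =
    \sum_(l < n.+1) occ_trans R n (inord r) l * occ_cdf R n t l k.
  rewrite /occ_cdf exprS; under eq_bigr do rewrite mxE.
  rewrite exchange_big; apply: eq_bigr => l _.
  by rewrite inord_val mulr_sumr.
by rewrite (occ_trans_row _ (fun l : 'I_n.+1 => occ_cdf R n t l k)) // !occ_cdf_inord.
Qed.

Lemma cdf0 (r k : nat) : (r <= n)%N -> occ_cdf R n 0 r k = (r <= k)%N%:R.
Proof.
move=> rn; rewrite /occ_cdf expr0.
have [rk|kr] := leqP r k.
  rewrite (bigD1 (inord r)) /= ?inordK ?rk // mxE eqxx big1 ?addr0 // => j /andP[_ jr].
  by rewrite mxE eq_sym (negbTE jr).
rewrite big1 // => j jk; rewrite mxE eq_sym eq_inord //.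
have [jr|//] := eqVneq (j : nat) r.
by move: jk; rewrite jr leqNgt kr.
Qed.

Lemma cdf_one (t r : nat) : (0 < n)%N -> (r <= n)%N -> occ_cdf R n t r n = 1.
Proof.
move=> n_gt0; have n0 : n%:R != 0 :> R by rewrite pnatr_eq0 -lt0n.
elim: t r => [|t IH] r rn; first by rewrite cdf0 // rn.
rewrite cdf_step // IH // mulr1.
have [rlt|rge] := ltnP r n.
  by rewrite IH // mulr1 -mulrDl -natrD subnKC ?mulfV // ltnW.
have -> : r = n by apply/eqP; rewrite eqn_leq rn.
by rewrite subnn !mul0r addr0 mulfV.
Qed.

(* The chain is nondecreasing, so it never visits states below its start. *)
Lemma cdf_zero (t r k : nat) : (r <= n)%N -> (k < r)%N -> occ_cdf R n t r k = 0.
Proof.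
elim: t r => [|t IH] r rn kr; first by rewrite cdf0 // leqNgt kr.
rewrite cdf_step // IH // mulr0 add0r.
have [rlt|rge] := ltnP r n; first by rewrite IH ?mulr0 // ltnW.
have -> : r = n by apply/eqP; rewrite eqn_leq rn.
by rewrite subnn !mul0r.
Qed.

End FirstStepAnalysis.

Section ClosedForm.

Variable R : numFieldType.

Let fact_neq0 (p : nat) : p`!%:R != 0 :> R.
Proof. by rewrite pnatr_eq0 -lt0n fact_gt0. Qed.

(* sum_(i <= m) (-1)^i C(m,i) / (a+i), i.e. the integral of
   x^(a-1) (1-x)^m over [0,1]. *)
Definition alt_recip_sum (m a : nat) : R :=
  \sum_(i < m.+1) (-1) ^+ i * 'C(m, i)%:R / (a + i)%:R.

(* Pascal's rule C(m+1,i) = C(m,i) + C(m,i-1) splits the sum in two. *)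
Lemma alt_recip_sum_pascal (m a : nat) :
  alt_recip_sum m.+1 a = alt_recip_sum m a - alt_recip_sum m a.+1.
Proof.
rewrite /alt_recip_sum big_ord_recl.
under eq_bigr do rewrite /bump /= binS natrD mulrDr mulrDl.
rewrite big_split /= addrA; congr (_ + _).
  rewrite [in RHS]big_ord_recl [X in _ + X = _]big_ord_recr /=.
  by rewrite (bin_small (ltnSn m)) mulr0 mul0r addr0 !bin0.
rewrite -[RHS]sumrN; apply: eq_bigr => i _.
by rewrite exprS addnS addSn; ring.
Qed.

Lemma alt_recip_sum_closed (m N : nat) :
  alt_recip_sum m N.+1 = m`!%:R * N`!%:R / (N.+1 + m)`!%:R.
Proof.
elim: m N => [|m IH] N.
  rewrite /alt_recip_sum big_ord1 addn0 factS natrM.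
  by field; rewrite fact_neq0 nat1r pnatr_eq0.
rewrite alt_recip_sum_pascal !IH addnS (_ : N.+2 + m = (N.+1 + m).+1)%N //.
have sizeS : (N.+1 + m).+1%:R = N.+1%:R + m.+1%:R :> R by rewrite -natrD addnS.
move: sizeS (fact_neq0 (N.+1 + m)); set a := (N.+1 + m)%N => sizeS a_neq0.
clearbody a; rewrite (factS a) (factS N) (factS m) !natrM sizeS.
by field; rewrite a_neq0 !nat1r -natrD pnatr_eq0.
Qed.

(* The alternating sum of the theorem, with m = k - r. *)
Definition occ_sum (n t r m : nat) : R :=
  \sum_(j < m.+1)
     ((-1) ^+ (m - j) * 'C(m, j)%:R * (r + j)%:R ^+ t / (n - r - j)%:R).

Definition occ_closed (n t r k : nat) : R :=
  (n - k)%:R / (n%:R ^+ t) * 'C(n - r, n - k)%:R * occ_sum n t r (k - r).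

(* At t = 0, reversing the summation order gives an [alt_recip_sum]. *)
Lemma occ_sum0 (n r m : nat) : (r + m <= n)%N ->
  occ_sum n 0 r m = alt_recip_sum m (n - r - m).
Proof.
move=> rmn; rewrite /occ_sum /alt_recip_sum (reindex_inj rev_ord_inj) /=.
apply: eq_bigr => j _; have jm : (j <= m)%N by rewrite -ltnS.
rewrite subSS subKn // bin_sub // expr0 mulr1.
by congr (_ / _%:R); lia.
Qed.

Lemma occ_closed0 (n r k : nat) : (r <= k)%N -> (k < n)%N -> occ_closed n 0 r k = 1.
Proof.
move=> rk kn; rewrite /occ_closed occ_sum0; last by lia.
have [N nkN] : exists N, (n - k = N.+1)%N by exists (n - k).-1; lia.
have -> : (n - r - (k - r) = N.+1)%N by lia.
have -> : (n - r = N.+1 + (k - r))%N by lia.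
rewrite nkN alt_recip_sum_closed.
have := bin_fact (leq_addr (k - r) N.+1); rewrite addKn => binE.
have C_neq0 : 'C(N.+1 + (k - r), N.+1)%:R != 0 :> R.
  by rewrite pnatr_eq0 -lt0n bin_gt0 leq_addr.
rewrite -binE (factS N) !natrM expr0.
by field; rewrite C_neq0 !fact_neq0 nat1r pnatr_eq0.
Qed.

(* Splitting (r+j)^(t+1) = r (r+j)^t + j (r+j)^t and using
   j C(m,j) = m C(m-1,j-1) gives the recurrence of the sums. *)
Lemma occ_sum_step (n t r m : nat) :
  occ_sum n t.+1 r m = r%:R * occ_sum n t r m + m%:R * occ_sum n t r.+1 m.-1.
Proof.
rewrite /occ_sum !mulr_sumr.
have -> : \sum_(j < m.+1) ((-1) ^+ (m - j) * 'C(m, j)%:R * (r + j)%:R ^+ t.+1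
             / (n - r - j)%:R) =
          \sum_(j < m.+1) (r%:R * ((-1) ^+ (m - j) * 'C(m, j)%:R * (r + j)%:R ^+ t
             / (n - r - j)%:R)) +
          \sum_(j < m.+1) (j%:R * 'C(m, j)%:R * ((-1) ^+ (m - j) * (r + j)%:R ^+ t
             / (n - r - j)%:R)) :> R.
  by rewrite -big_split; apply: eq_bigr => j _; rewrite exprS natrD /=; ring.
congr (_ + _); case: m => [|m]; first by rewrite !big_ord1 /= !mul0r.
rewrite big_ord_recl /= !mul0r add0r; apply: eq_bigr => j _.
rewrite /bump /= add1n -natrM -mul_bin_diag natrM subSS -!subnDA !addnS !addSn.
by ring.
Qed.

Lemma bin_shrink (n r k : nat) : (k <= n)%N ->
  ((n - r) * 'C(n - r.+1, n - k) = (k - r) * 'C(n - r, n - k))%N.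
Proof. by move=> kn; rewrite subnS mul_bin_down; congr (_ * _)%N; lia. Qed.

Lemma occ_closed_step (n t r k : nat) : (r <= k)%N -> (k < n)%N ->
  occ_closed n t.+1 r k =
    r%:R / n%:R * occ_closed n t r k + (n - r)%:R / n%:R * occ_closed n t r.+1 k.
Proof.
move=> rk kn; rewrite /occ_closed occ_sum_step -subnS.
have nr_neq0 : (n - r)%:R != 0 :> R by rewrite pnatr_eq0 subn_eq0 -ltnNge; lia.
have n_neq0 : n%:R != 0 :> R by rewrite pnatr_eq0 -lt0n; lia.
have binE : 'C(n - r.+1, n - k)%:R = (k - r)%:R * 'C(n - r, n - k)%:R / (n - r)%:R :> R.
  apply: (mulfI nr_neq0); rewrite [RHS]mulrC divfK // -!natrM.
  by rewrite (bin_shrink n r k (ltnW kn)).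
rewrite binE exprS.
by field; rewrite nr_neq0 n_neq0 expf_neq0.
Qed.

(* Just above the threshold the closed form vanishes, as C(n-k-1, n-k) = 0. *)
Lemma occ_closed_past (n t k : nat) : (k < n)%N -> occ_closed n t k.+1 k = 0.
Proof. by move=> kn; rewrite /occ_closed bin_small ?mulr0 ?mul0r //; lia. Qed.

End ClosedForm.

Theorem mainTheorem14 (R : realFieldType) (n : nat) (hn : (1 <= n)%N) :
  (forall (r k t : nat), (r <= k)%N -> (k < n)%N ->
     occ_cdf R n t r k =
       (n - k)%:R / (n%:R ^+ t) * 'C(n - r, n - k)%:R *
       \sum_(j < (k - r).+1)
          ((-1) ^+ (k - r - j) * 'C(k - r, j)%:R * (r + j)%:R ^+ t
             / (n - r - j)%:R))
  /\ (forall (r t : nat), (r <= n)%N -> occ_cdf R n t r n = 1)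
  /\ (forall (r k t : nat), (r <= n)%N -> (k < r)%N -> occ_cdf R n t r k = 0).
Proof.
split; last split; last first.
- by move=> r k t; apply: cdf_zero.
- by move=> r t; apply: cdf_one.
move=> r k t rk kn; change (occ_cdf R n t r k = occ_closed R n t r k).
elim: t r rk => [|t IH] r rk.
  by rewrite cdf0 ?rk ?occ_closed0 //; lia.
rewrite cdf_step; last by lia.
rewrite occ_closed_step // IH //; congr (_ + _ * _).
have [rlt|rge] := ltnP r k; first exact: IH.
have -> : r = k by apply/eqP; rewrite eqn_leq rk.
by rewrite cdf_zero ?occ_closed_past.
Qed.
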